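(* Let $(V,\cdot)$ be a nondegenerate intersection pairing of odd type that is not positive definite. Then there exists $v\in V$ such that $v\cdot v<0$ and $v\cdot v$ is odd.
   Context: An intersection pairing is a finitely generated free abelian group $V$ with a symmetric bilinear form $V\times V\to\mathbf{Z}$, $(u,w)\mapsto u\cdot w$; nondegenerate means the adjoint $V\to\mathrm{Hom}(V,\mathbf{Z})$ has nonzero determinant. It has odd type if $w\cdot w$ is odd for some $w\in V$. Positive definite means $u\cdot u>0$ for all $u\neq 0$. *)

(* An intersection pairing on V = Z^n (a finitely generated
   free abelian group, identified with row vectors 'rV[int]_n via a basis)
   is given by its Gram matrix A, required to be symmetric. *)
From mathcomp Require Import all_boot all_order all_algebra.
Set Implicit Arguments. Unset Strict Implicit. Unset Printing Implicit Defensive.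
Import Order.TTheory GRing.Theory Num.Theory.
Local Open Scope ring_scope.

Definition ipair (n : nat) (A : 'M[int]_n) (u w : 'rV[int]_n) : int :=
  (u *m A *m w^T) 0 0.

Definition gram_symmetric (n : nat) (A : 'M[int]_n) : Prop := A^T = A.

(* nondegenerate: the adjoint V -> Hom(V,Z) has nonzero determinant *)
Definition ipair_nondeg (n : nat) (A : 'M[int]_n) : Prop := \det A != 0.

Definition oddz (x : int) : bool := ~~ (2%:Z %| x)%Z.

Definition ipair_odd_type (n : nat) (A : 'M[int]_n) : Prop :=
  exists w : 'rV[int]_n, oddz (ipair A w w).

Definition ipair_pos_def (n : nat) (A : 'M[int]_n) : Prop :=
  forall u : 'rV[int]_n, u != 0 -> 0 < ipair A u u.

From mathcomp Require Import all_boot all_order all_algebra.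
From mathcomp Require Import zify ring.
From Stdlib Require Import Classical.
Import Order.TTheory GRing.Theory Num.Theory.
Local Open Scope ring_scope.

(* Pick u <> 0 with u.u <= 0. If u.u is odd we are done. Otherwise choose w
   with w.w odd and u.w = b <> 0 (nondegeneracy lets us correct an odd w by an
   even multiple of a basis vector), and put v = a u + w with a = -b(|w.w|+1):
   then v.v = a^2 u.u + 2ab + w.w is odd, and 2ab <= -2(|w.w|+1) makes it
   negative. *)

Section IntersectionPairing.
Context {n : nat} {A : 'M[int]_n}.

Lemma ipairDl u v w : ipair A (u + v) w = ipair A u w + ipair A v w.
Proof. by rewrite /ipair !mulmxDl mxE. Qed.

Lemma ipairDr u v w : ipair A u (v + w) = ipair A u v + ipair A u w.
Proof. by rewrite /ipair linearD /= mulmxDr mxE. Qed.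

Lemma ipairZl a u v : ipair A (a *: u) v = a * ipair A u v.
Proof. by rewrite /ipair -!scalemxAl mxE. Qed.

Lemma ipairZr a u v : ipair A u (a *: v) = a * ipair A u v.
Proof. by rewrite /ipair linearZ /= -scalemxAr mxE. Qed.

Lemma ipair_delta u j : ipair A u (delta_mx 0 j) = (u *m A) 0 j.
Proof. by rewrite /ipair trmx_delta -colE mxE. Qed.

Lemma ipair_nondeg_delta u : ipair_nondeg A -> u != 0 ->
  [exists j, ipair A u (delta_mx 0 j) != 0].
Proof.
rewrite /ipair_nondeg => + u_neq0; apply: contraNT => /existsPn uA0.
apply/det0P; exists u => //; apply/rowP => j.
by rewrite [RHS]mxE -ipair_delta; apply/eqP/negbNE/uA0.
Qed.

Lemma ipair_not_pos_def :
  ~ ipair_pos_def A -> exists2 u, u != 0 & ipair A u u <= 0.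
Proof.
move=> A_not_pos; apply: NNPP => no_u; apply: A_not_pos => u u_neq0.
by rewrite ltNge; apply/negP => uu_le0; apply: no_u; exists u.
Qed.

Hypothesis A_sym : gram_symmetric A.

Lemma ipairC u w : ipair A u w = ipair A w u.
Proof.
rewrite /ipair -[u *m A *m w^T]trmxK [in LHS]mxE.
by rewrite !trmx_mul trmxK A_sym mulmxA.
Qed.

Lemma ipair_sqr_lin a u w : ipair A (a *: u + w) (a *: u + w) =
  a * a * ipair A u u + 2 * a * ipair A u w + ipair A w w.
Proof. by rewrite !ipairDl !ipairDr !ipairZl !ipairZr (ipairC w u); ring. Qed.

Lemma ipair_odd_nonorthogonal u : ipair_nondeg A -> ipair_odd_type A ->
  u != 0 -> exists w, oddz (ipair A w w) /\ ipair A u w != 0.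
Proof.
move=> A_nondeg [w w_odd] u_neq0.
have [uw0 | uw_neq0] := eqVneq (ipair A u w) 0; last by exists w.
have /existsP[j uj_neq0] := ipair_nondeg_delta _ A_nondeg u_neq0.
exists (2 *: delta_mx 0 j + w); split.
  by rewrite ipair_sqr_lin; move: w_odd; rewrite /oddz; lia.
by rewrite ipairDr ipairZr uw0 addr0 mulf_neq0.
Qed.

End IntersectionPairing.

Lemma quadratic_neg_odd {q b c : int} : q <= 0 -> (2 %| q)%Z -> b != 0 ->
  oddz c -> exists a,
  a * a * q + 2 * a * b + c < 0 /\ oddz (a * a * q + 2 * a * b + c).
Proof.
rewrite /oddz => q_le0 q_even b_neq0 c_odd.
set a := - b * (`|c| + 1); exists a; split; last by lia.
have : a * a * q <= 0 by nia.
have : 1 <= b * b by nia.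
nia.
Qed.

Theorem mainTheorem5 (n : nat) (A : 'M[int]_n) :
  gram_symmetric A -> ipair_nondeg A -> ipair_odd_type A -> ~ ipair_pos_def A ->
  exists v : 'rV[int]_n, ipair A v v < 0 /\ oddz (ipair A v v).
Proof.
move=> A_sym A_nondeg A_odd /ipair_not_pos_def [u u_neq0 uu_le0].
have [uu_odd | uu_even] := boolP (oddz (ipair A u u)).
  by exists u; split=> //; move: uu_odd; rewrite /oddz; lia.
have [w [ww_odd uw_neq0]] := ipair_odd_nonorthogonal A_sym _ A_nondeg A_odd u_neq0.
rewrite /oddz negbK in uu_even.
have [a [vv_neg vv_odd]] := quadratic_neg_odd uu_le0 uu_even uw_neq0 ww_odd.
by exists (a *: u + w); rewrite ipair_sqr_lin.
Qed.
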